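(* If the moment matrix admits the Gauss–Borel factorization $g=S^{-1}\bar S$, then $S\Upsilon_1S^{-1}=\bar S\Upsilon_2^\top\bar S^{-1}$.
   Context: $g=(g_{i,j})_{i,j\ge0}$ with $g_{i,j}=\int x^{k_1(i)+k_2(j)}w_{1,a_1(i)}(x)w_{2,a_2(j)}(x)d\mu(x)$, where $\mu$ is a finite Borel measure on an interval, $w_{1,a}$ ($a\le p_1$), $w_{2,b}$ ($b\le p_2$) are weights with finite moments, and for compositions $\vec n_\ell\in\mathbb N^{p_\ell}$ each $i\in\mathbb Z_+$ is uniquely $i=q|\vec n_\ell|+n_{\ell,1}+\dots+n_{\ell,a-1}+r$, $0\le r<n_{\ell,a}$, $a_\ell(i)=a$, $k_\ell(i)=qn_{\ell,a}+r$. Gauss–Borel factorization: $S$ semi-infinite lower triangular with unit diagonal, $\bar S$ semi-infinite upper triangular with nonzero diagonal. $e_{\ell,a}(k)=e_i$ for the unique $i$ with $a_\ell(i)=a,k_\ell(i)=k$; $\Lambda_{\ell,a}=\sum_ke_{\ell,a}(k)e_{\ell,a}(k+1)^\top$; $\Upsilon_\ell=\sum_a\Lambda_{\ell,a}$. *)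

From HB Require Import structures.
From mathcomp Require Import all_boot all_order all_algebra.
From mathcomp Require Import all_classical all_reals all_analysis.
Set Implicit Arguments. Unset Strict Implicit. Unset Printing Implicit Defensive.
Import Order.TTheory GRing.Theory Num.Theory.
Local Open Scope ring_scope.

(* Semi-infinite matrices, indexed by nat x nat (rows/columns start at 0). *)
Definition smx (R : Type) := nat -> nat -> R.

Section SemiInfinite.
Variable R : realType.

(* Matrix product: (A B)_{ij} = sum_k A_{ik} B_{kj}, as a (real) series.
   In every product used below only finitely many terms are nonzero. *)
Definition smul (A B : smx R) : smx R :=
  fun i j => limn (fun N => \sum_(k < N) (A i k * B k j)).

Definition sid : smx R := fun i j => if i == j then 1 else 0.

Definition strm (A : smx R) : smx R := fun i j => A j i.

Definition lower_unitriangular (A : smx R) : Prop :=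
  forall i j, (i <= j)%N -> A i j = (if i == j then 1 else 0).

Definition lower_triangular (A : smx R) : Prop :=
  forall i j, (i < j)%N -> A i j = 0.

Definition upper_triangular (A : smx R) : Prop :=
  forall i j, (j < i)%N -> A i j = 0.

Definition upper_nonzero_diag (A : smx R) : Prop :=
  upper_triangular A /\ forall i, A i i != 0.
End SemiInfinite.

(* Compositions n = (n_0, ..., n_{p-1}) of positive integers (0-based
   indices a < p; the paper uses 1-based a = 1..p). *)
Definition composition (p : nat) (n : nat -> nat) : Prop :=
  (0 < p)%N /\ forall a, (a < p)%N -> (0 < n a)%N.

Definition csize (p : nat) (n : nat -> nat) : nat := \sum_(b < p) n b.

(* i = q|n| + n_0 + ... + n_{a-1} + r with 0 <= r < n_a *)
Definition aidx (p : nat) (n : nat -> nat) (i : nat) : nat :=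
  find (fun a => (i %% csize p n < \sum_(c < a.+1) n c)%N) (iota 0 p).

Definition ridx (p : nat) (n : nat -> nat) (i : nat) : nat :=
  (i %% csize p n - \sum_(c < aidx p n i) n c)%N.

Definition kidx (p : nat) (n : nat -> nat) (i : nat) : nat :=
  (i %/ csize p n * n (aidx p n i) + ridx p n i)%N.

Section Shifts.
Variable R : realType.

(* e_{a}(k) = e_i for the unique i with a(i) = a, k(i) = k; hence
   Lambda_a = sum_k e_a(k) e_a(k+1)^T has (i,j)-entry 1 iff
   a(i) = a(j) = a and k(j) = k(i) + 1, and 0 otherwise. *)
Definition Lambda (p : nat) (n : nat -> nat) (a : nat) : smx R :=
  fun i j => if [&& aidx p n i == a, aidx p n j == a &
                    kidx p n j == (kidx p n i).+1] then 1 else 0.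

Definition Upsilon (p : nat) (n : nat -> nat) : smx R :=
  fun i j => \sum_(a < p) Lambda p n a i j.

Definition moment_matrix (mu : {measure set R -> \bar R}) (D : set R)
  (p1 p2 : nat) (n1 n2 : nat -> nat) (w1 w2 : nat -> R -> R) : smx R :=
  fun i j => Rintegral mu D (fun x =>
     x ^+ (kidx p1 n1 i + kidx p2 n2 j) * w1 (aidx p1 n1 i) x
       * w2 (aidx p2 n2 j) x).
End Shifts.

From HB Require Import structures.
From mathcomp Require Import all_boot all_order all_algebra.
From mathcomp Require Import all_classical all_reals all_analysis.
From mathcomp Require Import zify.
Set Implicit Arguments. Unset Strict Implicit.
Import Order.TTheory GRing.Theory Num.Theory.

(* [Upsilon_1] and [Upsilon_2] are shifts: row [i] of [Upsilon] has a single
   1, in the column [next_idx i] with the same block [a] and degree [k + 1].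
   Hence [Upsilon_1 g] and [g Upsilon_2^T] both have entries
   [int x^(k1(i) + k2(j) + 1) w1 w2 dmu], i.e. [Upsilon_1 g = g Upsilon_2^T];
   this is an equality of integrals of one integrand.  With [S^-1 = g Sb^-1] and [S g = Sb],
   [S Upsilon_1 S^-1 = S Upsilon_1 g Sb^-1 = S g Upsilon_2^T Sb^-1
    = Sb Upsilon_2^T Sb^-1].
   Products of semi-infinite matrices are only associative under finiteness
   conditions; triangularity supplies finite rows or finite columns where
   each regrouping needs them. *)

Section Indices.
Variables (p : nat) (n : nat -> nat).
Hypothesis Hn : composition p n.

Let pref a := (\sum_(c < a) n c)%N.

Let prefS a : pref a.+1 = (pref a + n a)%N.
Proof. by rewrite /pref big_ord_recr. Qed.

Let pref_mono a b : (a <= b)%N -> (pref a <= pref b)%N.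
Proof.
move=> hab; rewrite /pref -!(big_mkord xpredT) (@big_cat_nat _ _ _ a 0 b _ _ (leq0n a) hab).
exact: leq_addr.
Qed.

Lemma csize_gt0 : (0 < csize p n)%N.
Proof.
case: Hn => hp hpos; have := pref_mono hp.
by rewrite prefS /pref big_ord0 add0n; apply: leq_trans; apply: hpos.
Qed.

Lemma aidx_spec i : [/\ (aidx p n i < p)%N, (pref (aidx p n i) <= i %% csize p n)%N
   & (i %% csize p n < pref (aidx p n i).+1)%N].
Proof.
case: Hn => hp hpos; rewrite /aidx; set P := (fun a => _).
have hhas : has P (iota 0 p).
  apply/hasP; exists p.-1; first by rewrite mem_iota /= add0n prednK.
  by rewrite /P prednK // ltn_pmod // csize_gt0.
have hlt : (find P (iota 0 p) < p)%N by rewrite -[p in (_ < p)%N](size_iota 0 p) -has_find.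
split => //; last by have := nth_find 0%N hhas; rewrite nth_iota.
case e: (find P (iota 0 p)) => [|a]; first by rewrite /pref big_ord0.
have := @before_find _ 0%N P (iota 0 p) a.
rewrite e ltnSn nth_iota; last by apply: ltnW; rewrite -e.
by rewrite /P add0n => /(_ isT) /negbT; rewrite -leqNgt.
Qed.

Lemma aidx_lt i : (aidx p n i < p)%N.
Proof. by case: (aidx_spec i). Qed.

Lemma ridx_lt i : (ridx p n i < n (aidx p n i))%N.
Proof. by have [_ h2 h3] := aidx_spec i; rewrite /ridx; rewrite prefS /pref in h3 h2; lia. Qed.

Lemma aidx_eq i a r : (a < p)%N -> (r < n a)%N -> i %% csize p n = (pref a + r)%N ->
  aidx p n i = a.
Proof.
move=> ha hr hx; have [_ h2 h3] := aidx_spec i; rewrite hx in h2 h3.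
case: (ltngtP (aidx p n i) a) => hb //; have := pref_mono hb.
- by rewrite prefS in h3 *; lia.
- by rewrite prefS in h2 *; lia.
Qed.

Lemma idx_decomp i : i = (i %/ csize p n * csize p n + pref (aidx p n i) + ridx p n i)%N.
Proof. by have [_ h2 _] := aidx_spec i; rewrite /ridx -addnA subnKC // -divn_eq. Qed.

Lemma idx_inj i j : aidx p n i = aidx p n j -> kidx p n i = kidx p n j -> i = j.
Proof.
rewrite /kidx => ha; rewrite -ha.
have hi := ridx_lt i; have hj := ridx_lt j; rewrite -ha in hj.
have hpos : (0 < n (aidx p n i))%N by case: Hn => _; apply; apply: aidx_lt.
move=> hk; have hq : i %/ csize p n = j %/ csize p n.
  have := congr1 (divn^~ (n (aidx p n i))) hk.
  by rewrite !divnMDl // (divn_small hi) (divn_small hj) !addn0.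
have hr : ridx p n i = ridx p n j by move: hk; rewrite hq; lia.
by rewrite (idx_decomp i) (idx_decomp j) hq hr ha.
Qed.

Definition idx_of q a r := (q * csize p n + pref a + r)%N.

Lemma idx_ofK q a r : (a < p)%N -> (r < n a)%N ->
  [/\ aidx p n (idx_of q a r) = a, ridx p n (idx_of q a r) = r
    & idx_of q a r %/ csize p n = q].
Proof.
move=> ha hr; have hlt : (pref a + r < csize p n)%N.
  by have := pref_mono ha; rewrite prefS /csize -/(pref p); lia.
have hm : idx_of q a r %% csize p n = (pref a + r)%N.
  by rewrite /idx_of -addnA modnMDl modn_small.
have ha' := aidx_eq ha hr hm.
split => //; first by rewrite /ridx ha' hm addKn.
by rewrite /idx_of -addnA divnMDl ?csize_gt0 // divn_small // addn0.
Qed.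

Definition next_idx i := let a := aidx p n i in
  idx_of ((kidx p n i).+1 %/ n a) a ((kidx p n i).+1 %% n a).

Lemma next_idx_spec i :
  aidx p n (next_idx i) = aidx p n i /\ kidx p n (next_idx i) = (kidx p n i).+1.
Proof.
have hpos : (0 < n (aidx p n i))%N by case: Hn => _; apply; apply: aidx_lt.
have [e1 e2 e3] := idx_ofK ((kidx p n i).+1 %/ n (aidx p n i))
   (aidx_lt i) (ltn_pmod (kidx p n i).+1 hpos).
by split => //; rewrite /kidx -/(next_idx i) e1 e2 e3 -divn_eq.
Qed.

Lemma Upsilon_next (R : realType) i j :
  Upsilon R p n i j = if j == next_idx i then 1%R else 0%R.
Proof.
have [a_next k_next] := next_idx_spec i.
rewrite /Upsilon (bigD1 (Ordinal (aidx_lt i))) //= big1 ?addr0 => [|a ha].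
  rewrite /Lambda eqxx /=; congr (if _ then _ else _); apply/idP/eqP.
    by case/andP => /eqP h1 /eqP h2; apply: idx_inj; rewrite ?a_next ?k_next.
  by move->; rewrite a_next k_next !eqxx.
rewrite /Lambda; case: eqP => //= e.
by move: ha; rewrite -(inj_eq val_inj) /= e eqxx.
Qed.

End Indices.

Local Open Scope ring_scope.
Local Open Scope classical_set_scope.

Lemma big_ord_widen0 (R : nmodType) (f : nat -> R) M K : (M <= K)%N ->
  (forall k, (M <= k)%N -> f k = 0) -> \sum_(k < K) f k = \sum_(k < M) f k.
Proof.
move=> hMK hf; rewrite -!(big_mkord xpredT) (@big_cat_nat _ _ _ M 0 K _ _ (leq0n M) hMK) /=.
by rewrite [X in _ + X]big1_seq ?addr0 // => k /andP[_]; rewrite mem_iota => /andP[/hf].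
Qed.

Lemma sum_mul_delta (R : pzSemiRingType) (F : nat -> R) (s K : nat) :
  \sum_(k < K) F k * (if (k : nat) == s then 1 else 0) = if (s < K)%N then F s else 0.
Proof.
case: ifP => hs.
  rewrite (bigD1 (Ordinal hs)) //= eqxx mulr1 big1 ?addr0 // => k hk.
  by rewrite ifF ?mulr0 //; apply: contraNF hk => /eqP e; apply/eqP/val_inj.
by rewrite big1 // => k _; rewrite ifF ?mulr0 //; apply: contraFF hs => /eqP <-.
Qed.

Section SemiInfiniteProducts.
Variable R : realType.
Implicit Types A B C : smx R.

Lemma smul_sum A B i j M :
  (forall k, (M <= k)%N -> A i k * B k j = 0) ->
  smul A B i j = \sum_(k < M) A i k * B k j.
Proof.
move=> H; suff h : (fun N => \sum_(k < N) A i k * B k j) @ \oo --> \sum_(k < M) A i k * B k j.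
  exact: norm_cvg_lim h.
by apply: cvg_near_cst; exists M => // K /= hK; apply: big_ord_widen0 hK H.
Qed.

Lemma smulmx1 A : smul A (sid R) = A.
Proof.
apply/funext => i; apply/funext => j.
rewrite (smul_sum (M := j.+1)) => [|k hk]; last by rewrite /sid gtn_eqF ?mulr0.
by rewrite sum_mul_delta ltnSn.
Qed.

Lemma smul1mx A : smul (sid R) A = A.
Proof.
apply/funext => i; apply/funext => j.
rewrite (smul_sum (M := i.+1)) => [|k hk]; last by rewrite /sid ltn_eqF ?mul0r.
under eq_bigr => k _ do rewrite /sid mulrC eq_sym.
by rewrite (sum_mul_delta (fun k => A k j)) ltnSn.
Qed.

Definition row_finite A := forall i, exists M, forall k, (M <= k)%N -> A i k = 0.

Definition col_finite A := forall j, exists M, forall k, (M <= k)%N -> A k j = 0.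

Lemma lower_triangular_row_finite A : lower_triangular A -> row_finite A.
Proof. by move=> hA i; exists i.+1 => k; apply: hA. Qed.

Lemma upper_triangular_col_finite A : upper_triangular A -> col_finite A.
Proof. by move=> hA j; exists j.+1 => k; apply: hA. Qed.

Lemma lower_unitriangular_lower A : lower_unitriangular A -> lower_triangular A.
Proof. by move=> hA i j hij; rewrite hA ?ltn_eqF // ltnW. Qed.

Lemma row_finite_uniform A : row_finite A ->
  forall N, exists M, forall m k, (m < N)%N -> (M <= k)%N -> A m k = 0.
Proof.
move=> hA; elim=> [|N [M hM]]; first by exists 0%N.
have [MN hMN] := hA N; exists (maxn M MN) => m k; rewrite ltnS leq_eqVlt geq_max.
by case/orP => [/eqP -> /andP[_ /hMN] | /hM h /andP[/h]].
Qed.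

Lemma smulA_row_col A B C : row_finite A -> col_finite C ->
  smul (smul A B) C = smul A (smul B C).
Proof.
move=> hA hC; apply/funext => i; apply/funext => j.
have [Ma hMa] := hA i; have [Mc hMc] := hC j.
have AB_sum k : smul A B i k = \sum_(m < Ma) A i m * B m k.
  by apply: smul_sum => m /hMa ->; rewrite mul0r.
have BC_sum m : smul B C m j = \sum_(k < Mc) B m k * C k j.
  by apply: smul_sum => k /hMc ->; rewrite mulr0.
rewrite (smul_sum (M := Mc)) => [|k /hMc ->]; last by rewrite mulr0.
rewrite (smul_sum (M := Ma)) => [|m /hMa ->]; last by rewrite mul0r.
under eq_bigr => k _ do rewrite AB_sum mulr_suml.
rewrite exchange_big; apply: eq_bigr => m _.
by rewrite BC_sum mulr_sumr; apply: eq_bigr => k _; rewrite mulrA.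
Qed.

Lemma smulA_row_row A B C : row_finite A -> row_finite B ->
  smul (smul A B) C = smul A (smul B C).
Proof.
move=> hA hB; apply/funext => i; apply/funext => j.
have [Ma hMa] := hA i; have [Mb hMb] := row_finite_uniform hB Ma.
have AB_sum k : smul A B i k = \sum_(m < Ma) A i m * B m k.
  by apply: smul_sum => m /hMa ->; rewrite mul0r.
rewrite (smul_sum (M := Mb)) => [|k hk]; last first.
  by rewrite AB_sum big1 ?mul0r // => m _; rewrite hMb ?mulr0.
rewrite (smul_sum (M := Ma)) => [|m /hMa ->]; last by rewrite mul0r.
under eq_bigr => k _ do rewrite AB_sum mulr_suml.
rewrite exchange_big; apply: eq_bigr => m _.
rewrite (smul_sum (M := Mb)) => [|k hk]; last by rewrite hMb ?mul0r.
by rewrite mulr_sumr; apply: eq_bigr => k _; rewrite mulrA.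
Qed.

Lemma row_finite_smul A B : row_finite A -> row_finite B -> row_finite (smul A B).
Proof.
move=> hA hB i; have [Ma hMa] := hA i; have [Mb hMb] := row_finite_uniform hB Ma.
exists Mb => k hk; rewrite (smul_sum (M := Ma)) => [|m /hMa ->]; last by rewrite mul0r.
by rewrite big1 // => m _; rewrite hMb ?mulr0.
Qed.

Variables (p : nat) (n : nat -> nat).
Hypothesis Hn : composition p n.

Lemma Upsilon_row_finite : row_finite (Upsilon R p n).
Proof.
move=> i; exists (next_idx p n i).+1 => k hk.
by rewrite (Upsilon_next Hn) gtn_eqF.
Qed.

Lemma trUpsilon_col_finite : col_finite (strm (Upsilon R p n)).
Proof. exact: Upsilon_row_finite. Qed.

Lemma smul_Upsilon_l B i j : smul (Upsilon R p n) B i j = B (next_idx p n i) j.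
Proof.
rewrite (smul_sum (M := (next_idx p n i).+1)) => [|k hk].
  under eq_bigr => k _ do rewrite (Upsilon_next Hn) mulrC.
  by rewrite (sum_mul_delta (fun k => B k j)) ltnSn.
by rewrite (Upsilon_next Hn) gtn_eqF ?mul0r.
Qed.

Lemma smul_trUpsilon_r A i j : smul A (strm (Upsilon R p n)) i j = A i (next_idx p n j).
Proof.
rewrite (smul_sum (M := (next_idx p n j).+1)) => [|k hk].
  by under eq_bigr => k _ do rewrite /strm (Upsilon_next Hn); rewrite sum_mul_delta ltnSn.
by rewrite /strm (Upsilon_next Hn) gtn_eqF ?mulr0.
Qed.

End SemiInfiniteProducts.

Lemma moment_matrix_shift (R : realType) (mu : {measure set R -> \bar R}) (D : set R)
  (p1 p2 : nat) (n1 n2 : nat -> nat) (w1 w2 : nat -> R -> R) :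
  composition p1 n1 -> composition p2 n2 ->
  smul (Upsilon R p1 n1) (moment_matrix mu D p1 p2 n1 n2 w1 w2)
  = smul (moment_matrix mu D p1 p2 n1 n2 w1 w2) (strm (Upsilon R p2 n2)).
Proof.
move=> Hn1 Hn2; apply/funext => i; apply/funext => j.
rewrite smul_Upsilon_l // smul_trUpsilon_r // /moment_matrix.
have [a1 k1] := next_idx_spec Hn1 i; have [a2 k2] := next_idx_spec Hn2 j.
by rewrite a1 k1 a2 k2 addSn addnS.
Qed.

Unset Implicit Arguments. Set Strict Implicit.

Theorem proposition2p13 (R : realType)
  (mu : {finite_measure set R -> \bar R}) (I : interval R)
  (p1 p2 : nat) (n1 n2 : nat -> nat) (w1 w2 : nat -> R -> R)
  (Hn1 : composition p1 n1) (Hn2 : composition p2 n2)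
  (Hw1 : forall a, (a < p1)%N ->
     measurable_fun [set` I] (w1 a) /\ (forall x, x \in I -> 0 <= w1 a x))
  (Hw2 : forall b, (b < p2)%N ->
     measurable_fun [set` I] (w2 b) /\ (forall x, x \in I -> 0 <= w2 b x))
  (Hmom : forall a b m, (a < p1)%N -> (b < p2)%N ->
     mu.-integrable [set` I] (fun x => (x ^+ m * w1 a x * w2 b x)%:E))
  (S Sinv Sb Sbinv : smx R)
  (HS : lower_unitriangular S)
  (HSinv : lower_triangular Sinv /\ smul S Sinv = sid R /\ smul Sinv S = sid R)
  (HSb : upper_nonzero_diag Sb)
  (HSbinv : upper_triangular Sbinv /\ smul Sb Sbinv = sid R
            /\ smul Sbinv Sb = sid R)
  (Hfact : moment_matrix mu [set` I] p1 p2 n1 n2 w1 w2 = smul Sinv Sb) :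
  smul (smul S (Upsilon R p1 n1)) Sinv
  = smul (smul Sb (strm (Upsilon R p2 n2))) Sbinv.
Proof.
case: HSinv => /lower_triangular_row_finite Sinv_rf [S_Sinv _].
case: HSb => /upper_triangular_col_finite Sb_cf _.
case: HSbinv => /upper_triangular_col_finite Sbinv_cf [Sb_Sbinv _].
have S_rf := lower_triangular_row_finite (lower_unitriangular_lower HS).
have U1_rf := Upsilon_row_finite R Hn1.
have U2t_cf := trUpsilon_col_finite R Hn2.
have g_shift := moment_matrix_shift mu [set` I] w1 w2 Hn1 Hn2.
set g := moment_matrix _ _ _ _ _ _ _ _ in Hfact g_shift.
have Sinv_g : Sinv = smul g Sbinv by rewrite Hfact smulA_row_col // Sb_Sbinv smulmx1.
have S_g : smul S g = Sb by rewrite Hfact -smulA_row_col // S_Sinv smul1mx.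
rewrite {1}Sinv_g -smulA_row_col //; last exact: row_finite_smul.
by rewrite (@smulA_row_row _ S) // g_shift -smulA_row_col // S_g.
Qed.
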